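(* Let $E$ be a countable directed graph which is row-finite and has no sources, let $G$ be a discrete group acting on $E$ by graph automorphisms, and let $\varphi:G\times E^1\to G$ be a 1-cocycle with $\varphi(g,a)\cdot x=g\cdot x$ for all $g,a,x$. Then every tight filter in the semilattice of idempotents $E(\mathcal{S}_{G,E})$ is an ultrafilter; that is, the tight spectrum $\widehat E_{\mathrm{tight}}(\mathcal{S}_{G,E})$ coincides with the space $\widehat E_\infty(\mathcal{S}_{G,E})$ of ultrafilters (which is homeomorphic to $E^\infty$ via $\omega\mapsto\{(\omega|_n,1,\omega|_n):n\in\mathbb{N}\}$).
   Context: Conventions: paths $\alpha=\alpha_1\cdots\alpha_n$ with $s(\alpha_i)=r(\alpha_{i+1})$, $r(\alpha)=r(\alpha_1)$, $s(\alpha)=s(\alpha_n)$; vertices are paths of length 0; $E^*$ finite paths, $E^\infty$ infinite paths $\omega=\omega_1\omega_2\cdots$, $\omega|_n=\omega_1\cdots\omega_n$. Row-finite without sources: $0<|r^{-1}(x)|<\infty$ for every vertex $x$. 1-cocycle: $\varphi(gh,a)=\varphi(g,ha)\varphi(h,a)$; action and cocycle extend to paths by $g(a\alpha')=(ga)(\varphi(g,a)\alpha')$, $\varphi(g,a\alpha')=\varphi(\varphi(g,a),\alpha')$, $\varphi(g,x)=g$ for vertices. $\mathcal{S}_{G,E}=\{(\alpha,g,\beta):\alpha,\beta\in E^*,\ g\in G,\ s(\alpha)=g\,s(\beta)\}\cup\{0\}$, with $(\alpha,g,\beta)(\gamma,h,\delta)$ equal to $(\alpha,g\varphi(h,\varepsilon),\delta(h^{-1}\varepsilon))$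 if $\beta=\gamma\varepsilon$, to $(\alpha(g\varepsilon),\varphi(g,\varepsilon)h,\delta)$ if $\gamma=\beta\varepsilon$, and $0$ otherwise; $(\alpha,g,\beta)^*=(\beta,g^{-1},\alpha)$. Its nonzero idempotents are $(\alpha,1,\alpha)$, $\alpha\in E^*$, with $(\alpha,1,\alpha)\le(\beta,1,\beta)$ iff $\beta$ is a prefix of $\alpha$. A filter is a nonempty subset $\xi\subseteq E(\mathcal{S}_{G,E})$ not containing $0$, closed under products and upward closed; an ultrafilter is a maximal filter. For finite $X,Y\subseteq E(S)$, $E(S)^{X,Y}=\{e: e\le x\ \forall x\in X,\ ey=0\ \forall y\in Y\}$; a finite $Z\subseteq E(S)^{X,Y}$ is a cover if every nonzero element of $E(S)^{X,Y}$ has nonzero product with some $z\in Z$. A filter $\xi$ is tight if whenever $X,Y$ are finite with $X\subseteq\xi$ and $Y\cap\xi=\emptyset$, every finite cover $Z$ of $E(S)^{X,Y}$ satisfies $Z\cap\xi\ne\emptyset$. *)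

From mathcomp Require Import all_boot.
From Stdlib Require List.

Record group := Group {
  gcar :> Type;
  gmul : gcar -> gcar -> gcar;
  gone : gcar;
  ginv : gcar -> gcar;
  gmulA : forall x y z, gmul x (gmul y z) = gmul (gmul x y) z;
  gmul1 : forall x, gmul gone x = x;
  gmulV : forall x, gmul (ginv x) x = gone }.

Arguments gmul {_} _ _.

Record ssdata := SSData {
  V : countType;
  Ed : countType;
  rng : Ed -> V;
  src : Ed -> V;
  grp : group;
  actV : grp -> V -> V;
  actE : grp -> Ed -> Ed;
  phi : grp -> Ed -> grp }.

Section SelfSimilar.
Variable D : ssdata.
Local Notation G := (grp D).
Local Notation r := (rng D).
Local Notation s := (src D).
Local Notation "g * h" := (gmul g h).

Definition row_finite_no_sources : Prop :=
  forall x : V D, exists l : seq (Ed D),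
    l != [::] /\ forall a, (r a == x) = (a \in l).

Definition graph_action : Prop :=
  [/\ (forall x, actV D (gone G) x = x),
      (forall g h : G, forall x, actV D (g * h) x = actV D g (actV D h x)),
      (forall a, actE D (gone G) a = a) &
      (forall g h : G, forall a, actE D (g * h) a = actE D g (actE D h a))] /\
  (forall (g : G) a, r (actE D g a) = actV D g (r a)) /\
  (forall (g : G) a, s (actE D g a) = actV D g (s a)).

Definition one_cocycle : Prop :=
  forall g h : G, forall a, phi D (g * h) a = phi D g (actE D h a) * phi D h a.

Definition cocycle_fixes_vertices : Prop :=
  forall g a x, actV D (phi D g a) x = actV D g x.

(* A finite path is a pair (x, l) where l = a_1 ... a_n is a
   sequence of edges with s(a_i) = r(a_{i+1}) and, if n > 0, r(a_1) = x.
   Paths of length 0 are the vertices (x, [::]).  r(x, l) = x. *)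
Definition fpath := (V D * seq (Ed D))%type.

Fixpoint chain (l : seq (Ed D)) : bool :=
  if l is a :: l' then
    (if l' is b :: _ then s a == r b else true) && chain l'
  else true.

Definition is_path (p : fpath) : bool :=
  (if p.2 is a :: _ then r a == p.1 else true) && chain p.2.

Definition psrc (p : fpath) : V D :=
  if p.2 is a :: l then s (last a l) else p.1.

Definition pcat (p q : fpath) : fpath := (p.1, p.2 ++ q.2).

Definition pprefix (p q : fpath) : bool := (p.1 == q.1) && prefix p.2 q.2.

Definition prest (p q : fpath) : fpath := (psrc p, drop (size p.2) q.2).

Fixpoint act_seq (g : G) (l : seq (Ed D)) : seq (Ed D) :=
  if l is a :: l' then actE D g a :: act_seq (phi D g a) l' else [::].

Fixpoint phi_seq (g : G) (l : seq (Ed D)) : G :=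
  if l is a :: l' then phi_seq (phi D g a) l' else g.

Definition act_path (g : G) (p : fpath) : fpath := (actV D g p.1, act_seq g p.2).
Definition phi_path (g : G) (p : fpath) : G := phi_seq g p.2.

(* Elements of S_{G,E}: None is 0, Some (alpha, g, beta) is (alpha, g, beta). *)
Definition Sraw := option (fpath * G * fpath).

Definition inS (x : Sraw) : Prop :=
  match x with
  | None => True
  | Some (al, g, be) => is_path al /\ is_path be /\ psrc al = actV D g (psrc be)
  end.

Definition Smul (x y : Sraw) : Sraw :=
  match x, y with
  | Some (al, g, be), Some (ga, h, de) =>
      if pprefix ga be then
        let eps := prest ga be in
        Some (al, g * phi_path h eps, pcat de (act_path (ginv G h) eps))
      else if pprefix be ga then
        let eps := prest be ga in
        Some (pcat al (act_path g eps), phi_path g eps * h, de)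
      else None
  | _, _ => None
  end.

Definition Sstar (x : Sraw) : Sraw :=
  match x with
  | Some (al, g, be) => Some (be, ginv G g, al)
  | None => None
  end.

Definition idem (e : Sraw) : Prop := inS e /\ Smul e e = e.
Definition Sle (e f : Sraw) : Prop := e = Smul e f.

Definition is_filter (xi : Sraw -> Prop) : Prop :=
  [/\ (forall e, xi e -> idem e),
      (exists e, xi e),
      ~ xi None,
      (forall e f, xi e -> xi f -> xi (Smul e f)) &
      (forall e f, xi e -> idem f -> Sle e f -> xi f)].

Definition is_ultrafilter (xi : Sraw -> Prop) : Prop :=
  is_filter xi /\
  forall eta, is_filter eta -> (forall e, xi e -> eta e) -> forall e, eta e -> xi e.

Definition EXY (X Y : seq Sraw) (e : Sraw) : Prop :=
  idem e /\ (forall x, List.In x X -> Sle e x) /\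
  (forall y, List.In y Y -> Smul e y = None).

Definition is_cover (X Y Z : seq Sraw) : Prop :=
  (forall z, List.In z Z -> EXY X Y z) /\
  forall e, EXY X Y e -> e <> None -> exists z, List.In z Z /\ Smul e z <> None.

Definition is_tight (xi : Sraw -> Prop) : Prop :=
  is_filter xi /\
  forall X Y : seq Sraw,
    (forall x, List.In x X -> xi x) ->
    (forall y, List.In y Y -> idem y /\ ~ xi y) ->
    forall Z, is_cover X Y Z -> exists z, List.In z Z /\ xi z.

End SelfSimilar.

From Pilot Require Import Defs.
From mathcomp Require Import all_boot.
From Stdlib Require Import Classical.

(* The nonzero idempotents of S_{G,E} are the (α, 1, α), and (α, 1, α)(β, 1, β)
   is nonzero exactly when α and β are comparable for the prefix order.  Hence
   a filter is a set of pairwise comparable paths closed under prefixes, i.e.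
   a finite path or an infinite one, and both tightness and maximality amount
   to the filter containing arbitrarily long paths.  If α lies in a tight
   filter, then the one-edge extensions αe (finitely many by row-finiteness,
   at least one since there are no sources) cover E^{{α},∅}, so some αe lies
   in the filter.  If α lies in an ultrafilter with no longer path in it, the
   filter is contained in the principal filter of some αe, contradicting
   maximality.  Conversely a filter with arbitrarily long paths contains a
   path longer than all those occurring in given finite X, Y, Z; its
   idempotent lies in E^{X,Y}, so it meets some element of a cover Z, which
   must then be one of its prefixes. *)

Set Implicit Arguments.
Unset Strict Implicit.
Unset Printing Implicit Defensive.

Lemma InP (T : eqType) (x : T) (s : seq T) : reflect (List.In x s) (x \in s).
Proof.
elim: s => [|y s IHs] /=; first by right.
rewrite in_cons; apply: (iffP orP) => [[/eqP->|/IHs]|[->|/IHs]]; by [left|right|].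
Qed.

Lemma In_leq_sumn (T : Type) (f : T -> nat) (s : seq T) x :
  List.In x s -> f x <= sumn (List.map f s).
Proof.
elim: s => [|y s IHs] //= [->|/IHs fx]; first exact: leq_addr.
exact: leq_trans fx (leq_addl _ _).
Qed.

Lemma gidem_eq1 (G : group) (x : G) : gmul x x = x -> x = gone G.
Proof. by move=> xx; have := gmulV G x; rewrite -{2}xx gmulA gmulV gmul1. Qed.

Lemma gmulgV (G : group) (x : G) : gmul x (ginv G x) = gone G.
Proof. by apply: gidem_eq1; rewrite -gmulA (gmulA G (ginv G x) x) gmulV gmul1. Qed.

Lemma gmulg1 (G : group) (x : G) : gmul x (gone G) = x.
Proof. by rewrite -(gmulV G x) gmulA gmulgV gmul1. Qed.

Lemma ginv1 (G : group) : ginv G (gone G) = gone G.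
Proof. by rewrite -{1}(gmulg1 (ginv G (gone G))) gmulV. Qed.

Section SelfSimilarFilters.

Variable D : ssdata.
Local Notation G := (grp D).
Local Notation fpath := (Defs.fpath D).
Local Notation r := (rng D).
Local Notation pprefix := (Defs.pprefix D).

Definition diag (a : fpath) : Sraw D := Some (a, gone G, a).

Lemma pprefix_refl (a : fpath) : pprefix a a.
Proof. by rewrite /Defs.pprefix eqxx prefix_refl. Qed.

Lemma pprefix_trans (a b c : fpath) : pprefix a b -> pprefix b c -> pprefix a c.
Proof.
case: a b c => [x l] [y m] [z n] /andP[/eqP/= -> lm] /andP[/eqP/= -> mn].
by rewrite /Defs.pprefix eqxx (prefix_trans lm mn).
Qed.

Lemma size_pprefix (a b : fpath) : pprefix a b -> size a.2 <= size b.2.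
Proof. by case/andP=> _ /size_prefix. Qed.

Lemma eq_pprefix_size (a b : fpath) : pprefix a b -> size b.2 <= size a.2 -> a = b.
Proof.
case: a b => [x l] [y m] /andP[/eqP/= -> /prefixP[t ->]].
rewrite size_cat -{2}[size l]addn0 leq_add2l leqn0 size_eq0 /=.
by move=> /eqP->; rewrite cats0.
Qed.

Lemma pprefix_comparable (a b c : fpath) :
  pprefix a c -> pprefix b c -> pprefix a b || pprefix b a.
Proof.
case: a b c => [x l] [y m] [z n]; rewrite /Defs.pprefix /= !prefixE.
move=> /andP[/eqP-> /eqP nl] /andP[/eqP-> /eqP nm]; rewrite eqxx /=.
case: (leqP (size l) (size m)) => [lm|/ltnW ml].
  by apply/orP; left; rewrite -nm take_takel ?nl.
by apply/orP; right; rewrite -nl take_takel ?nm.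
Qed.

Lemma pcat_prest (a b : fpath) : pprefix a b -> pcat D a (prest D a b) = b.
Proof.
case: a b => [x l] [y m] /andP[/eqP/= -> /prefixP[t ->]].
by rewrite /pcat /prest /= drop_size_cat.
Qed.

Lemma pprefix_rcons x l c : pprefix (x, l) (x, rcons l c).
Proof. by rewrite /Defs.pprefix eqxx prefix_rcons. Qed.

Lemma chain_rng_next a l c t : chain D (a :: l ++ c :: t) -> r c = src D (last a l).
Proof.
elim: l a => [|b l IHl] a /=; first by case/andP=> /eqP.
by case/andP=> _ /IHl.
Qed.

Lemma is_path_rng_next x l c t : is_path D (x, l ++ c :: t) -> r c = psrc D (x, l).
Proof.
case: l => [|a l] /andP[/= /eqP ra ch]; first by rewrite ra.
exact: chain_rng_next ch.
Qed.

Lemma chain_rcons a l c :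
  chain D (a :: l) -> r c = src D (last a l) -> chain D (rcons (a :: l) c).
Proof.
elim: l a => [|b l IHl] a /=; first by move=> _ ->; rewrite eqxx.
by case/andP=> -> /IHl.
Qed.

Lemma is_path_rcons x l c :
  is_path D (x, l) -> r c = psrc D (x, l) -> is_path D (x, rcons l c).
Proof.
case: l => [|a l] /andP[/= ra pl] rc; first by rewrite /is_path /= rc eqxx.
by apply/andP; split; [exact: ra | exact: chain_rcons].
Qed.

Lemma size_act_seq (g : G) l : size (act_seq D g l) = size l.
Proof. by elim: l g => [|a l IHl] g //=; rewrite IHl. Qed.

Lemma pcat_act_prest_id (p a b : fpath) (g : G) :
  pprefix a b -> pcat D p (act_path D g (prest D a b)) = p -> a = b.
Proof.
move=> ab /(congr1 (fun q : fpath => size q.2)) /eqP.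
rewrite /= size_cat size_act_seq size_drop -[X in _ == X]addn0 eqn_add2l subn_eq0.
exact: eq_pprefix_size.
Qed.

Lemma phi_path_prest_id (g : G) (a : fpath) : phi_path D g (prest D a a) = g.
Proof. by rewrite /phi_path /prest /= drop_size. Qed.

Lemma idem_cases (e : Sraw D) :
  idem D e -> e = None \/ exists2 a, is_path D a & e = diag a.
Proof.
case: e => [[[al g] be]|]; last by left.
move=> [[pal _] idE]; right; move: idE; rewrite /Smul.
case: ifP => [alb [gE /(pcat_act_prest_id alb) al_be]|_].
  by subst be; rewrite phi_path_prest_id in gE; rewrite (gidem_eq1 gE); exists al.
case: ifP => [bal [/(pcat_act_prest_id bal) be_al gE]|//].
by subst be; rewrite phi_path_prest_id in gE; rewrite (gidem_eq1 gE); exists al.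
Qed.

Hypothesis actV1 : forall x, actV D (gone G) x = x.
Hypothesis actE1 : forall a, actE D (gone G) a = a.
Hypothesis phi_cocycle : one_cocycle D.

Lemma phi1 a : phi D (gone G) a = gone G.
Proof. by apply: gidem_eq1; rewrite -{1}(actE1 a) -phi_cocycle gmul1. Qed.

Lemma act_seq1 l : act_seq D (gone G) l = l.
Proof. by elim: l => [|a l IHl] //=; rewrite phi1 IHl actE1. Qed.

Lemma phi_seq1 l : phi_seq D (gone G) l = gone G.
Proof. by elim: l => [|a l IHl] //=; rewrite phi1. Qed.

Lemma Smul_diag (a b : fpath) : Smul D (diag a) (diag b) =
  if pprefix b a then diag a else if pprefix a b then diag b else None.
Proof.
rewrite /Smul /diag /act_path /phi_path /= ginv1 !act_seq1 !phi_seq1 gmul1.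
case: ifP => [ba|_]; first by congr (Some (_, _, _)); exact: pcat_prest ba.
by case: ifP => [ab|//]; congr (Some (_, _, _)); exact: pcat_prest ab.
Qed.

Lemma Smul_diag_neq0 (a b : fpath) :
  Smul D (diag a) (diag b) <> None <-> pprefix b a || pprefix a b.
Proof. by rewrite Smul_diag; case: ifP => //; case: ifP. Qed.

Lemma Sle_diag (a b : fpath) : Sle D (diag a) (diag b) <-> pprefix b a.
Proof.
rewrite /Sle Smul_diag; split => [|->] //.
by case: ifP => // ba; case: ifP => // _ [ab]; rewrite ab pprefix_refl in ba.
Qed.

Lemma idem_diag (a : fpath) : is_path D a -> idem D (diag a).
Proof. by move=> pa; split; [rewrite /= actV1 | rewrite Smul_diag pprefix_refl]. Qed.

Section Filter.

Variable xi : Sraw D -> Prop.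
Hypothesis xi_filter : is_filter D xi.

Lemma filter_diag e : xi e -> exists2 a, is_path D a & e = diag a.
Proof.
case: xi_filter => xi_idem _ xi0 _ _ xe.
by case: (idem_cases (xi_idem _ xe)) => // e0; rewrite e0 in xe.
Qed.

Lemma filter_path a : xi (diag a) -> is_path D a.
Proof. by case: xi_filter => xi_idem _ _ _ _ /xi_idem [[]]. Qed.

Lemma filter_comparable a b : xi (diag a) -> xi (diag b) -> pprefix a b || pprefix b a.
Proof.
case: xi_filter => _ _ xi0 xiM _ xa xb; rewrite orbC.
by apply/Smul_diag_neq0 => ab0; apply: xi0; rewrite -ab0; apply: xiM.
Qed.

Lemma filter_prefix_closed a b : xi (diag a) -> is_path D b -> pprefix b a -> xi (diag b).
Proof.
case: xi_filter => _ _ _ _ xi_up xa pb ba.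
by apply: (xi_up _ _ xa); [exact: idem_diag | exact/Sle_diag].
Qed.

End Filter.

Definition unbounded (xi : Sraw D -> Prop) : Prop :=
  forall a, xi (diag a) -> exists2 b, xi (diag b) & size a.2 < size b.2.

Lemma unbounded_long xi : is_filter D xi -> unbounded xi ->
  forall n, exists2 a, xi (diag a) & n <= size a.2.
Proof.
move=> xiF xiU; elim=> [|n [a /xiU [b xb ab] na]].
  have [e xe] : exists e, xi e by case: xiF.
  by have [a _ ea] := filter_diag xiF xe; exists a; rewrite -?ea.
by exists b => //; exact: leq_ltn_trans na ab.
Qed.

Lemma unbounded_ultrafilter xi : is_filter D xi -> unbounded xi -> is_ultrafilter D xi.
Proof.
move=> xiF xiU; split=> // eta etaF xi_eta e eb.
have [b pb eE] := filter_diag etaF eb; subst e.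
have [a xa long_a] := unbounded_long xiF xiU (size b.2).+1.
case/orP: (filter_comparable etaF (xi_eta _ xa) eb) => [/size_pprefix|ba].
  by rewrite leqNgt long_a.
exact: (filter_prefix_closed xiF xa pb ba).
Qed.

Lemma row_finite_no_sources_rng : row_finite_no_sources D -> forall v, exists c, r c = v.
Proof.
by move=> rf v; have [[|c L] [] // _ /(_ c)] := rf v; rewrite mem_head => /eqP; exists c.
Qed.

Definition upset (e f : Sraw D) : Prop := idem D f /\ Sle D e f.

Lemma upset_diagP b e :
  upset (diag b) e -> exists2 a, e = diag a & is_path D a /\ pprefix a b.
Proof.
case=> /idem_cases [->|[a pa ->]] //.
by move/Sle_diag; exists a.
Qed.

Lemma upset_diag_self b : is_path D b -> upset (diag b) (diag b).
Proof. by split; [exact: idem_diag | exact/Sle_diag/pprefix_refl]. Qed.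

Lemma upset_diag_filter b : is_path D b -> is_filter D (upset (diag b)).
Proof.
move=> pb; split.
- by move=> e [].
- by exists (diag b); exact: upset_diag_self.
- by case.
- move=> _ _ /upset_diagP[a1 -> [p1 a1b]] /upset_diagP[a2 -> [p2 a2b]].
  rewrite Smul_diag; case: ifP => [_|a21].
    by split; [exact: idem_diag | exact/Sle_diag].
  case: ifP => [_|a12]; first by split; [exact: idem_diag | exact/Sle_diag].
  by have := pprefix_comparable a1b a2b; rewrite a12 a21.
- move=> _ f /upset_diagP[a -> [_ ab]] /idem_cases [->|[c pc ->]] // /Sle_diag ca.
  by split; [exact: idem_diag | exact/Sle_diag/(pprefix_trans ca)].
Qed.

Lemma ultrafilter_unbounded xi : (forall v, exists c, r c = v) ->
  is_ultrafilter D xi -> unbounded xi.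
Proof.
move=> rng_onto [xiF xi_max] [x l] xa; apply: NNPP => no_longer.
have [c rc] := rng_onto (psrc D (x, l)).
have pa' : is_path D (x, rcons l c) := is_path_rcons (filter_path xiF xa) rc.
have xi_up e : xi e -> upset (diag (x, rcons l c)) e.
  move=> xe; have [g pg eg] := filter_diag xiF xe; subst e.
  split; first exact: idem_diag.
  apply/Sle_diag; case/orP: (filter_comparable xiF xe xa) => [ga|ag].
    exact: pprefix_trans ga (pprefix_rcons x l c).
  case: (leqP (size g.2) (size l)) => [short|long]; last by case: no_longer; exists g.
  by rewrite -(eq_pprefix_size ag short) pprefix_rcons.
apply: no_longer; exists (x, rcons l c); last by rewrite size_rcons.
exact: (xi_max _ (upset_diag_filter pa') xi_up _ (upset_diag_self pa')).
Qed.

Lemma extensions_cover x l (L : seq (Ed D)) :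
  is_path D (x, l) -> L != [::] -> (forall c, (r c == psrc D (x, l)) = (c \in L)) ->
  is_cover D [:: diag (x, l)] [::] (List.map (fun c => diag (x, rcons l c)) L).
Proof.
move=> pa L0 HL; split.
  move=> _ /List.in_map_iff [c [<- /InP cL]].
  have rc : r c = psrc D (x, l) by apply/eqP; rewrite HL.
  split; first exact/idem_diag/is_path_rcons.
  by split=> // _ [<-|//]; exact/Sle_diag/pprefix_rcons.
move=> _ [/idem_cases [->|[[y m] pb ->]] [eX _]] // _.
have /Sle_diag/andP[/(@eqP _ x y) yx /prefixP[[|c t] mE]] := eX _ (or_introl erefl);
  rewrite /= in mE; subst y m.
  have [c cL] : exists c, c \in L.
    by case: L L0 {HL} => [|c L] // _; exists c; rewrite mem_head.
  exists (diag (x, rcons l c)); split; first by apply: List.in_map; apply/InP.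
  by apply/Smul_diag_neq0; rewrite cats0 pprefix_rcons orbT.
exists (diag (x, rcons l c)); split.
  by apply: List.in_map; apply/InP; rewrite -HL (is_path_rng_next pb).
by apply/Smul_diag_neq0; rewrite /Defs.pprefix eqxx -cat_rcons prefix_prefix.
Qed.

Lemma tight_unbounded xi : row_finite_no_sources D -> is_tight D xi -> unbounded xi.
Proof.
move=> rf [xiF xi_tight] [x l] xa.
have [L [L0 HL]] := rf (psrc D (x, l)).
have xX : forall e, List.In e [:: diag (x, l)] -> xi e by move=> e [<-|].
have cover := extensions_cover (filter_path xiF xa) L0 HL.
have [z [/List.in_map_iff [c [<- _]] xz]] :=
  xi_tight _ [::] xX (fun _ => False_ind _) _ cover.
by exists (x, rcons l c); rewrite ?size_rcons.
Qed.

Definition left_length (e : Sraw D) : nat := if e is Some (a, _, _) then size a.2 else 0.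

Lemma unbounded_tight xi : is_filter D xi -> unbounded xi -> is_tight D xi.
Proof.
move=> xiF xiU; split=> // X Y xX xY Z [Z_sub Z_cover].
set W := X ++ Y ++ Z.
have inX w : List.In w X -> List.In w W by rewrite List.in_app_iff; left.
have inY w : List.In w Y -> List.In w W by rewrite !List.in_app_iff; right; left.
have inZ w : List.In w Z -> List.In w W by rewrite !List.in_app_iff; right; right.
have [d xd long_d] := unbounded_long xiF xiU (sumn (List.map left_length W)).+1.
have short g : List.In (diag g) W -> ~~ pprefix d g.
  move=> /(In_leq_sumn left_length) gW; apply/negP => /size_pprefix dg.
  by move: long_d; rewrite ltnNge (leq_trans dg gW).
have meets g : List.In (diag g) W -> Smul D (diag d) (diag g) <> None -> pprefix g d.
  by move=> /short dg /Smul_diag_neq0; rewrite (negbTE dg) orbF.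
have dXY : EXY D X Y (diag d).
  split; first exact/idem_diag/(filter_path xiF xd).
  split=> w.
    move=> wX; have [g _ wg] := filter_diag xiF (xX _ wX); subst w.
    apply/Sle_diag; have := filter_comparable xiF xd (xX _ wX).
    by rewrite (negbTE (short _ (inX _ wX))).
  move=> wY; have [/idem_cases [->|[g pg wg]] xw] := xY _ wY => //; subst w.
  rewrite Smul_diag (negbTE (short _ (inY _ wY))); case: ifP => // gd.
  by case: xw; exact: (filter_prefix_closed xiF xd pg gd).
have [z [zZ dz]] : exists z, List.In z Z /\ Smul D (diag d) z <> None by exact: Z_cover.
exists z; split=> //; have [/idem_cases [zE|[g pg zE]] _] := Z_sub _ zZ; subst z => //.
exact: (filter_prefix_closed xiF xd pg (meets _ (inZ _ zZ) dz)).
Qed.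

End SelfSimilarFilters.

Theorem proposition4p1 (D : ssdata) :
  row_finite_no_sources D ->
  graph_action D ->
  one_cocycle D ->
  cocycle_fixes_vertices D ->
  forall xi : Sraw D -> Prop, is_tight D xi <-> is_ultrafilter D xi.
Proof.
(* Only the idempotents (α, 1, α) enter. *)
move=> rf [[actV1 _ actE1 _] _] cocycle _ xi; split=> [xi_tight | xi_ultra].
  apply: (unbounded_ultrafilter actV1 actE1 cocycle); first by case: xi_tight.
  exact: (tight_unbounded actV1 actE1 cocycle rf).
apply: (unbounded_tight actV1 actE1 cocycle); first by case: xi_ultra.
exact: (ultrafilter_unbounded actV1 actE1 cocycle (row_finite_no_sources_rng rf)).
Qed.
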